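(* Let $\mathbb{F}$ be an infinite field, $n\ge1$, and for $i=1,\dots,n$ let $m_i\ge 2$ and $L_i\ge1$ be integers. Put $R_i=\frac{m_i^{L_i}-1}{m_i-1}$, $D_i=\prod_{k=1}^{i-1}R_k$ (so $D_1=1$), $K_0=\prod_{i=1}^nR_i$, $N=\prod_{i=1}^nL_i$, and $e_i(s)=\frac{m_i^{s-1}-1}{m_i-1}=1+m_i+\dots+m_i^{s-2}$ for $s=1,\dots,L_i$ (with $e_i(1)=0$). In the sliced-contraction setting described in the context, define for $x\in\mathbb{F}$ the encoded tensors $$\tilde A^{(i,j)}(x)=\sum_{s=1}^{L_i}A^{(i,j)}_{s}\,x^{D_i\,e_i(s)}\qquad (j=1,\dots,m_i),$$ and $g(x)=\Phi\big(\tilde A^{(1,1)}(x),\dots,\tilde A^{(1,m_1)}(x),\dots,\tilde A^{(n,1)}(x),\dots,\tilde A^{(n,m_n)}(x)\big)$. Then $g$ is a polynomial in $x$ with coefficients in $W$ of degree at most $K_0-1$, and for each $(s_1,\dots,s_n)$ the coefficient of $x^{\sum_i D_i m_i e_i(s_i)}$ in $g$ equals the sliced partition $\sigma_{s_1\cdots s_n}$ (these $N$ exponents are pairwise distinct, and no other product of slices contributes to them). Consequently, for every integer $f\ge0$, the scheme with $K=f+K_0$ workers, worker $k$ computing $g(x_k)$ for pairwise distinct $x_1,\dots,x_K\in\mathbb{F}$, allows the master to recover every $\sigma_{s_1\cdots s_n}$ and hence $\sigma_{\mathrm{final}}$ from the outputs of any $K_0$ workers. Hence the $f$-resilient number $f+\prod_{i=1}^n\frac{m_i^{L_i}-1}{m_i-1}$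 is achievable, with gain compared to naive replication $$\Delta=\Big(\prod_{i=1}^nL_i-1\Big)(f+1)-\prod_{i=1}^n\frac{m_i^{L_i}-1}{m_i-1}+1.$$
   Context: Setting (sliced parallel tensor network contraction). A tensor network is contracted in parallel by ''slicing'' $n$ of its closed indices: index $i$ has dimension $L_i$ and is shared by $m_i$ tensors (an ''$m_i$-node index''), and the sliced indices are pairwise non-adjacent, i.e. no tensor carries two sliced indices. Fixing the value $s_i\in\{1,\dots,L_i\}$ of each sliced index turns each of the $m_i$ tensors attached to index $i$ into a sliced subtensor $A^{(i,j)}_{s_i}\in V_{i,j}$ ($j=1,\dots,m_i$), and contracting the rest of the network (all tensors not attached to sliced indices, together with all non-sliced indices) is a multilinear map $\Phi:\prod_{i=1}^n\prod_{j=1}^{m_i}V_{i,j}\to W$ between finite-dimensional vector spaces over an infinite field $\mathbb{F}$. The sliced partition for $(s_1,\dots,s_n)$ is $\sigma_{s_1\cdots s_n}=\Phi(A^{(1,1)}_{s_1},\dots,A^{(1,m_1)}_{s_1},\dots,A^{(n,1)}_{s_n},\dots,A^{(n,m_n)}_{s_n})$, and the desired output is $\sigma_{\mathrm{final}}=\sum_{s_1,\dots,s_n}\sigma_{s_1\cdots s_n}$; there are $N=\prod_i L_i$ sliced partitions. Computing model: a master distributes work to workers; each worker evaluates $\Phi$ once on one input from each $V_{i,j}$ (so it has the same computational cost as computing one sliced partition) and returns the result; up to $f$ workers may fail, and nothing is recovered from a failed worker. The $f$-resilient number of a scheme is the total number of workers required so that $\sigma_{\mathrm{final}}$ can be retrieved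 despite any $f$ worker failures. Naive replication (each of the $N$ sliced partitions computed by $f+1$ workers) has $f$-resilient number $N(f+1)$; the gain of a scheme is $N(f+1)$ minus its $f$-resilient number. *)

From HB Require Import structures.
From mathcomp Require Import all_boot all_order all_algebra.
Set Implicit Arguments. Unset Strict Implicit. Unset Printing Implicit Defensive.
Import Order.TTheory GRing.Theory Num.Theory.
Local Open Scope ring_scope.

(* Slices are 0-indexed: paper's s in {1..L} is our s' = s - 1 in 'I_L. *)

Definition ecoef (m s : nat) : nat := ((m ^ s - 1) %/ (m - 1))%N.

Definition Rnum (m L : nat) : nat := ((m ^ L - 1) %/ (m - 1))%N.

Definition Dnum (n : nat) (m L : 'I_n -> nat) (i : 'I_n) : nat :=
  (\prod_(k < n | (k < i)%N) Rnum (m k) (L k))%N.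

Definition K0num (n : nat) (m L : 'I_n -> nat) : nat :=
  (\prod_(i < n) Rnum (m i) (L i))%N.

Definition Nnum (n : nat) (L : 'I_n -> nat) : nat := (\prod_(i < n) L i)%N.

(* The positions (i, j), j < m_i, of the sliced subtensors. *)
Definition slot (n : nat) (m : 'I_n -> nat) : finType := {i : 'I_n & 'I_(m i)}.

Definition sliceidx (n : nat) (L : 'I_n -> nat) : finType :=
  {dffun forall i : 'I_n, 'I_(L i)}.

Definition multilinear (F : fieldType) (I : eqType) (V : I -> lmodType F)
  (W : lmodType F) (Phi : (forall i, V i) -> W) : Prop :=
  forall (a : forall i, V i) (i : I) (c : F) (u v : V i),
    Phi (dfwith a (c *: u + v)) = c *: Phi (dfwith a u) + Phi (dfwith a v).

Section Scheme.
Variables (F : fieldType) (n : nat) (m L : 'I_n -> nat).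
Variables (W : vectType F) (V : slot m -> vectType F).
Variable Phi : (forall p : slot m, V p) -> W.
Variable A : forall p : slot m, 'I_(L (tag p)) -> V p.

Definition encoded (x : F) (p : slot m) : V p :=
  \sum_(s < L (tag p)) x ^+ (Dnum m L (tag p) * ecoef (m (tag p)) s)%N *: @A p s.

Definition gfun (x : F) : W := Phi (fun p => encoded x p).

Definition sliced (s : sliceidx L) : W := Phi (fun p => @A p (s (tag p))).

Definition sigma_final : W := \sum_(s : sliceidx L) sliced s.

End Scheme.

Definition expo (n : nat) (m L : 'I_n -> nat) (s : sliceidx L) : nat :=
  (\sum_(i < n) Dnum m L i * m i * ecoef (m i) (s i))%N.

From HB Require Import structures.
From mathcomp Require Import all_boot all_order all_algebra zify.
Import Order.TTheory GRing.Theory Num.Theory.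
From Stdlib Require Import FunctionalExtensionality.

(* The multilinear expansion of g(x) has one term per choice t of a slice t(i,j)
   for every sliced subtensor, carrying the power x^E(t) with
   E(t) = sum_i D_i d_i(t), d_i(t) = sum_j e_i(t(i,j)).  Since
   e_i(s+1) = m_i e_i(s) + 1, each digit satisfies d_i(t) < R_i, so E(t) is the
   mixed-radix numeral with digits d_i(t) in radices R_1, ..., R_n: it is below
   K_0 and determines every digit.  A digit equals m_i e_i(s_i) only if all
   t(i,j) = s_i, so the coefficient of x^(sum_i D_i m_i e_i(s_i)) is the single
   sliced partition sigma_s.  As g has degree below K_0, any K_0 distinct
   evaluations determine its coefficients through the inverse of a Vandermonde
   matrix. *)

Section GeometricSums.
Context {m : nat}.
Hypothesis m_gt1 : 1 < m.

Lemma ecoefS s : ecoef m s.+1 = (m * ecoef m s).+1.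
Proof.
have ecoefE t : ecoef m t = \sum_(j < t) m ^ j.
  by rewrite /ecoef !subn1 predn_exp mulKn //; lia.
rewrite !ecoefE big_ord_recl expn0 add1n big_distrr /=.
by congr _.+1; apply: eq_bigr => j _; rewrite expnS.
Qed.

Lemma ltn_ecoef : {mono ecoef m : s t / s < t}.
Proof.
apply: leqW_mono; apply: leq_mono; apply: homo_ltn => [s t u|s]; first exact: ltn_trans.
by rewrite ecoefS ltnS leq_pmull // ltnW.
Qed.

Lemma leq_ecoef : {mono ecoef m : s t / s <= t}.
Proof. by move=> s t; rewrite leqNgt ltn_ecoef -leqNgt. Qed.

Lemma ecoef_inj : injective (ecoef m).
Proof. exact: incn_inj leq_ecoef. Qed.

Lemma ltn_mul_ecoef s L : s < L -> m * ecoef m s < Rnum m L.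
Proof. by move=> ltsL; rewrite -ltnS -ecoefS ltnS leq_ecoef. Qed.

Lemma sum_ecoef_lt L (t : 'I_m -> nat) :
  (forall j, t j < L) -> \sum_(j < m) ecoef m (t j) < Rnum m L.
Proof.
case: L => [/(_ (Ordinal (ltnW m_gt1)))//|L] ltL.
rewrite /Rnum -/(ecoef m L.+1) ecoefS ltnS -[m in m * _]card_ord -sum_nat_const.
by apply: leq_sum => j _; rewrite leq_ecoef -ltnS.
Qed.

(* As [m * ecoef m s < ecoef m s.+1], no [t j] exceeds [s]; a sum of [m] terms
   each at most [ecoef m s] then reaches [m * ecoef m s] only if all are equal to it. *)
Lemma sum_ecoef_eq s (t : 'I_m -> nat) :
  \sum_(j < m) ecoef m (t j) = m * ecoef m s -> forall j, t j = s.
Proof.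
move=> sum_t.
have le_ts j : t j <= s.
  rewrite -ltnS -ltn_ecoef ecoefS ltnS -sum_t.
  by rewrite (bigD1 j) //= leq_addr.
have le_iff j : ecoef m (t j) <= ecoef m s ?= iff (t j == s).
  by split; [rewrite leq_ecoef le_ts | rewrite (inj_eq ecoef_inj)].
have [_] := leqif_sum (fun j (_ : true) => le_iff j).
rewrite sum_t sum_nat_const card_ord eqxx => /esym/forallP all_s j.
exact/eqP/all_s.
Qed.

End GeometricSums.

Section MixedRadix.
Variable r : nat -> nat.

Lemma nat_radix_lt {k} {a : nat -> nat} : (forall i, i < k -> a i < r i) ->
  \sum_(i < k) (\prod_(j < i) r j) * a i < \prod_(j < k) r j.
Proof.
elim: k => [|k IHk] lt_ar; first by rewrite !big_ord0.
rewrite !big_ord_recr /= mulnC.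
have := IHk (fun i lt_ik => lt_ar i (ltnW lt_ik)).
move: (\sum_(i < k) _) (\prod_(j < k) _) => low P lt_low.
apply: (@leq_trans (P * (a k).+1)); first by rewrite mulnS; lia.
by rewrite leq_mul2l lt_ar ?orbT.
Qed.

Lemma nat_radix_inj {k} {a b : nat -> nat} :
  (forall i, i < k -> a i < r i) -> (forall i, i < k -> b i < r i) ->
  \sum_(i < k) (\prod_(j < i) r j) * a i = \sum_(i < k) (\prod_(j < i) r j) * b i ->
  forall i, i < k -> a i = b i.
Proof.
elim: k => // k IHk lt_ar lt_br.
have lt_ar' i : i < k -> a i < r i by move/ltnW; apply: lt_ar.
have lt_br' i : i < k -> b i < r i by move/ltnW; apply: lt_br.
rewrite !big_ord_recr /= ![_ * a k]mulnC ![_ * b k]mulnC.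
have := nat_radix_lt lt_ar'; have := nat_radix_lt lt_br'.
set low_a := \sum_(i < k) _ * a i; set low_b := \sum_(i < k) _ * b i.
set P := \prod_(j < k) _ => lt_b lt_a eq_ab.
have eq_k : a k = b k.
  have P_gt0 : 0 < P by apply: leq_ltn_trans lt_a.
  move: (congr1 (divn^~ P) eq_ab).
  by rewrite ![_ + _ * P]addnC !divnMDl // !divn_small // !addn0.
move: eq_ab; rewrite eq_k => /addIn eq_low i.
rewrite ltnS leq_eqVlt => /predU1P[-> // | lt_ik].
exact: IHk lt_ar' lt_br' eq_low i lt_ik.
Qed.

End MixedRadix.

Definition mixed_radix {n} (r a : 'I_n -> nat) : nat :=
  \sum_(i < n) (\prod_(k < n | k < i) r k) * a i.

Definition ord_ext {n} (f : 'I_n -> nat) (j : nat) : nat :=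
  if insub j is Some i then f i else 0.

Lemma ord_extE {n} (f : 'I_n -> nat) (i : 'I_n) : ord_ext f i = f i.
Proof. by rewrite /ord_ext valK. Qed.

Lemma mixed_radix_ext n (r a : 'I_n -> nat) :
  mixed_radix r a = \sum_(i < n) (\prod_(j < i) ord_ext r j) * ord_ext a i.
Proof.
apply: eq_bigr => i _; rewrite ord_extE; congr (_ * _).
rewrite (eq_bigr (fun k : 'I_n => ord_ext r k)) => [|k _]; last by rewrite ord_extE.
rewrite -(big_mkord (fun k => k < i)) -(big_mkord xpredT).
by rewrite (@big_nat_widen _ _ _ 0 i n xpredT) // ltnW.
Qed.

Lemma prod_ord_ext n (r : 'I_n -> nat) : \prod_(i < n) r i = \prod_(j < n) ord_ext r j.
Proof. by apply: eq_bigr => i _; rewrite ord_extE. Qed.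

Lemma ord_ext_lt {n} {f g : 'I_n -> nat} :
  (forall i, f i < g i) -> forall j, j < n -> ord_ext f j < ord_ext g j.
Proof. by move=> lt_fg j lt_jn; rewrite -[j]/(nat_of_ord (Ordinal lt_jn)) !ord_extE. Qed.

Lemma mixed_radix_lt {n} {r a : 'I_n -> nat} :
  (forall i, a i < r i) -> mixed_radix r a < \prod_(i < n) r i.
Proof.
by move=> lt_ar; rewrite mixed_radix_ext prod_ord_ext; apply/nat_radix_lt/ord_ext_lt.
Qed.

Lemma mixed_radix_inj {n} {r a b : 'I_n -> nat} :
  (forall i, a i < r i) -> (forall i, b i < r i) ->
  mixed_radix r a = mixed_radix r b -> a =1 b.
Proof.
move=> lt_ar lt_br; rewrite !mixed_radix_ext => eq_ab i.
rewrite -(ord_extE a) -(ord_extE b).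
exact: nat_radix_inj _ (ord_ext_lt lt_ar) (ord_ext_lt lt_br) eq_ab i (ltn_ord i).
Qed.

Local Open Scope ring_scope.

Section Multilinear.
Context {F : fieldType} {I : finType} {V : I -> lmodType F} {W : lmodType F}.
Context {Phi : (forall i, V i) -> W} (Phi_ml : multilinear Phi).

Lemma multilinear0 (a : forall i, V i) i : Phi (dfwith a (0 : V i)) = 0.
Proof.
have := Phi_ml a i 1 0 0; rewrite scaler0 add0r scale1r => /esym/eqP.
by rewrite -subr_eq0 addrK => /eqP.
Qed.

Lemma multilinear_sum (a : forall i, V i) i (X : Type) (r : seq X) (P : pred X)
    (c : X -> F) (v : X -> V i) :
  Phi (dfwith a (\sum_(x <- r | P x) c x *: v x)) =
  \sum_(x <- r | P x) c x *: Phi (dfwith a (v x)).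
Proof.
apply: (big_rec2 (fun y1 y2 => Phi (dfwith a y1) = y2)); first exact: multilinear0.
by move=> x y1 y2 _ <-; rewrite Phi_ml.
Qed.

Definition patch (s : seq I) (f a : forall i, V i) : forall i, V i :=
  fun i => if i \in s then f i else a i.

Lemma patch_nil f a : patch [::] f a = a.
Proof. by []. Qed.

Lemma patch_cons k s f a : patch (k :: s) f a = dfwith (patch s f a) (f k).
Proof.
apply: functional_extensionality_dep => i; rewrite /patch in_cons.
by case: dfwithP => [|j]; rewrite ?eqxx // eq_sym => /negbTE->.
Qed.

Lemma patch_dfwith k s f a (x : V k) :
  k \notin s -> dfwith (patch s f a) x = patch s f (dfwith a x).
Proof.
move=> k_s; apply: functional_extensionality_dep => i; rewrite /patch.
case: dfwithP => [|j k_j]; first by rewrite (negbTE k_s) dfwith_in.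
by rewrite dfwith_out.
Qed.

Lemma eq_patch s f g a : (forall i, i \in s -> f i = g i) -> patch s f a = patch s g a.
Proof.
by move=> eq_fg; apply: functional_extensionality_dep => i; rewrite /patch; case: ifP => // /eq_fg.
Qed.

Lemma patch_enum f a : patch (enum I) f a = f.
Proof. by apply: functional_extensionality_dep => i; rewrite /patch mem_enum. Qed.

End Multilinear.

Section Choices.
Context {I : finType} {J : I -> finType} (t0 : forall i, J i).

Local Notation T := {dffun forall i, J i}.

Definition upd (t : T) {k : I} (j : J k) : T := finfun (dfwith (fun i => t i) j).

Lemma upd_in (t : T) k (j : J k) : upd t j k = j.
Proof. by rewrite ffunE dfwith_in. Qed.

Lemma upd_out (t : T) k (j : J k) i : k != i -> upd t j i = t i.
Proof. by move=> k_i; rewrite ffunE dfwith_out. Qed.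

Lemma upd_eq_id (t : T) k (j : J k) : (upd t j == t) = (j == t k).
Proof.
apply/eqP/eqP => [<-|->]; first by rewrite upd_in.
by apply/ffunP => i; case: (eqVneq k i) => [<-|/upd_out//]; rewrite upd_in.
Qed.

Lemma updK (t : T) k (j j' : J k) : upd (upd t j) j' = upd t j'.
Proof.
by apply/ffunP => i; case: (eqVneq k i) => [<-|k_i]; rewrite ?upd_in // !upd_out.
Qed.

Definition eq_off (s : seq I) (t : T) : bool := [forall i, (i \notin s) ==> (t i == t0 i)].

Lemma eq_off_nil (t : T) : eq_off [::] t = (t == finfun t0 :> T).
Proof.
apply/forallP/eqP => [eq_t|->]; last by move=> i; rewrite ffunE eqxx.
by apply/ffunP => i; rewrite ffunE; exact/eqP/eq_t.
Qed.

Lemma eq_off_cons_upd k s (t : T) (j : J k) : eq_off (k :: s) (upd t j) = eq_off (k :: s) t.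
Proof.
apply: eq_forallb => i; case: (eqVneq k i) => [<-|k_i]; first by rewrite mem_head.
by rewrite upd_out.
Qed.

Lemma eq_off_cons {k s} (t : T) : k \notin s -> eq_off s t = eq_off (k :: s) t && (t k == t0 k).
Proof.
move=> k_s; apply/forallP/andP => [eq_t|[/forallP eq_t t_k] i].
  split; last exact: implyP (eq_t k) k_s.
  by apply/forallP => i; apply/implyP; rewrite in_cons negb_or => /andP[_ /(implyP (eq_t i))].
case: (eqVneq k i) => [<-//|k_i]; first exact/implyP.
by apply/implyP => i_s; apply: (implyP (eq_t i)); rewrite in_cons negb_or eq_sym k_i.
Qed.

Section BigOp.
Context {R : Type} {idx : R} (op : Monoid.com_law idx).

Lemma big_eq_off_nil (G : T -> R) : \big[op/idx]_(t | eq_off [::] t) G t = G (finfun t0 : T).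
Proof. by rewrite (big_pred1 (finfun t0 : T)) // => t; rewrite /= eq_off_nil. Qed.

Lemma big_eq_off_cons k s (G : T -> R) : k \notin s ->
  \big[op/idx]_(t | eq_off (k :: s) t) G t =
  \big[op/idx]_(j : J k) \big[op/idx]_(t | eq_off s t) G (upd t j).
Proof.
move=> k_s; rewrite (partition_big (fun t : T => t k) xpredT) //.
apply: eq_bigr => j _.
rewrite (reindex_onto (fun t : T => upd t j) (fun t : T => upd t (t0 k))) => [|t /andP[_ /eqP t_k]].
  apply: eq_bigl => t; rewrite eq_off_cons_upd upd_in eqxx andbT updK upd_eq_id.
  by rewrite (eq_off_cons _ k_s) eq_sym.
by rewrite updK -t_k; apply/eqP; rewrite upd_eq_id.
Qed.

End BigOp.
End Choices.

Section MultilinearExpansion.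
Context {F : fieldType} {I : finType} {V : I -> lmodType F} {W : lmodType F}.
Context {Phi : (forall i, V i) -> W} (Phi_ml : multilinear Phi).
Context {J : I -> finType} (t0 : forall i, J i).
Context {w : forall i, J i -> F} {u : forall i, J i -> V i}.

Local Notation T := {dffun forall i, J i}.

Lemma multilinear_expand_patch {s} : uniq s -> forall a : forall i, V i,
  Phi (patch s (fun i => \sum_(j : J i) w i j *: u i j) a) =
  \sum_(t : T | eq_off t0 s t) (\prod_(i <- s) w i (t i)) *:
    Phi (patch s (fun i => u i (t i)) a).
Proof.
elim: s => [_ a|k s IHs /andP[k_s uniq_s] a].
  by rewrite big_eq_off_nil big_nil scale1r !patch_nil.
rewrite patch_cons (multilinear_sum Phi_ml) big_eq_off_cons //.
apply: eq_bigr => j _; rewrite patch_dfwith // IHs // scaler_sumr.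
apply: eq_bigr => t _; rewrite scalerA big_cons patch_cons !upd_in patch_dfwith //.
have upd_s i : i \in s -> upd t j i = t i.
  by move=> i_s; rewrite upd_out //; apply: contraNneq k_s => ->.
congr (_ * _ *: Phi _); first by apply: eq_big_seq => i /upd_s ->.
by apply: eq_patch => i /upd_s ->.
Qed.

Lemma multilinear_expand :
  Phi (fun i => \sum_(j : J i) w i j *: u i j) =
  \sum_(t : T) (\prod_(i : I) w i (t i)) *: Phi (fun i => u i (t i)).
Proof.
have := multilinear_expand_patch (enum_uniq I) (fun _ => 0).
rewrite patch_enum => ->; apply: eq_big => [t|t _].
  by apply/forallP => i; rewrite mem_enum.
by rewrite patch_enum big_enum.
Qed.

End MultilinearExpansion.

Section Interpolation.
Context {F : fieldType} {W : lmodType F} {K : nat} (a : 'I_K -> F).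
Hypothesis a_inj : injective a.

Local Notation Va := (Vandermonde K (\row_l a l)).

Lemma Vandermonde_unitmx : Va \in unitmx.
Proof.
rewrite unitmxE unitfE det_Vandermonde.
apply/prodf_neq0 => i _; apply/prodf_neq0 => j lt_ij; rewrite !mxE subr_eq0.
by apply: contraTneq lt_ij => /a_inj ->; rewrite ltnn.
Qed.

Lemma Vandermonde_interpolate (c : nat -> W) (e : 'I_K) :
  \sum_(l < K) invmx Va l e *: (\sum_(k < K) a l ^+ k *: c k) = c e.
Proof.
under eq_bigr => l _ do rewrite scaler_sumr.
rewrite exchange_big /=.
transitivity (\sum_(k < K) (Va *m invmx Va) k e *: c k).
  apply: eq_bigr => k _; rewrite mxE scaler_suml; apply: eq_bigr => l _.
  by rewrite scalerA !mxE mulrC.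
rewrite mulmxV ?Vandermonde_unitmx // (bigD1 e) //= big1 => [|k k_e].
  by rewrite mxE eqxx mulr1n scale1r addr0.
by rewrite mxE (negbTE k_e) mulr0n scale0r.
Qed.

End Interpolation.

Lemma avoiding_injection {N K} {S : {set 'I_N}} :
  (K <= #|~: S|)%N -> {h : 'I_K -> 'I_N | injective h & forall l, h l \notin S}.
Proof.
move=> le_K; exists (fun l => enum_val (widen_ord le_K l)).
  by move=> l1 l2 /enum_val_inj /(congr1 val) /= /val_inj.
by move=> l; have := enum_valP (widen_ord le_K l); rewrite inE.
Qed.

Section SlicedScheme.
Context {F : fieldType} {n : nat} {m L : 'I_n -> nat}.
Hypotheses (m_gt1 : forall i, (1 < m i)%N) (L_gt0 : forall i, (0 < L i)%N).

Local Notation T := {dffun forall p : slot m, 'I_(L (tag p))}.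
Local Notation R i := (Rnum (m i) (L i)).

Definition choice_expo (t : T) : nat :=
  \sum_(p : slot m) Dnum m L (tag p) * ecoef (m (tag p)) (t p).

Definition choice_digit (t : T) (i : 'I_n) : nat :=
  \sum_(j < m i) ecoef (m i) (t (Tagged (fun i => 'I_(m i)) j)).

Definition diag_choice (s : sliceidx L) : T := [ffun p => s (tag p)].

Lemma choice_expoE t : choice_expo t = mixed_radix (fun i => R i) (choice_digit t).
Proof.
rewrite /mixed_radix; under [RHS]eq_bigr => i _ do rewrite big_distrr.
rewrite (@sig_big_dep _ _ _ _ (fun i => 'I_(m i)) xpredT (fun i _ => true)
  (fun i j => Dnum m L i * ecoef (m i) (t (Tagged (fun i => 'I_(m i)) j)))%N).
by apply: eq_bigr => -[i j].
Qed.

Lemma choice_digit_lt t i : (choice_digit t i < R i)%N.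
Proof. by apply: sum_ecoef_lt => // j; exact: ltn_ord. Qed.

Lemma choice_expo_lt t : (choice_expo t < K0num m L)%N.
Proof. by rewrite choice_expoE; apply: mixed_radix_lt; exact: choice_digit_lt. Qed.

Lemma expoE (s : sliceidx L) :
  expo m s = mixed_radix (fun i => R i) (fun i => m i * ecoef (m i) (s i))%N.
Proof. by apply: eq_bigr => i _; rewrite mulnA. Qed.

Lemma slice_digit_lt (s : sliceidx L) i : (m i * ecoef (m i) (s i) < R i)%N.
Proof. exact: ltn_mul_ecoef. Qed.

Lemma expo_lt (s : sliceidx L) : (expo m s < K0num m L)%N.
Proof. by rewrite expoE; apply: mixed_radix_lt; exact: slice_digit_lt. Qed.

Lemma expo_inj : injective (@expo n m L).
Proof.
move=> s1 s2; rewrite !expoE => /(mixed_radix_inj (slice_digit_lt s1) (slice_digit_lt s2)) eq_s.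
apply/ffunP => i; apply/val_inj/(ecoef_inj (m_gt1 i)).
by apply/eqP; rewrite -(eqn_pmul2l (ltnW (m_gt1 i))) eq_s.
Qed.

Lemma choice_expo_diag s : choice_expo (diag_choice s) = expo m s.
Proof.
rewrite choice_expoE expoE; apply: eq_bigr => i _; congr (_ * _)%N.
rewrite /choice_digit; under eq_bigr => j _ do rewrite ffunE /=.
by rewrite sum_nat_const card_ord.
Qed.

Lemma choice_expo_eq t s : (choice_expo t == expo m s) = (t == diag_choice s).
Proof.
apply/eqP/eqP => [|->]; last exact: choice_expo_diag.
rewrite choice_expoE expoE.
move/(mixed_radix_inj (choice_digit_lt t) (slice_digit_lt s)) => eq_digit.
apply/ffunP => -[i j]; rewrite ffunE; apply/val_inj.
exact: sum_ecoef_eq (m_gt1 i) _ _ (eq_digit i) j.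
Qed.

Definition gfun_coef {W : vectType F} {V : slot m -> vectType F}
    (Phi : (forall p : slot m, V p) -> W) (A : forall p : slot m, 'I_(L (tag p)) -> V p)
    (k : nat) : W :=
  \sum_(t : T | choice_expo t == k) Phi (fun p => A p (t p)).

Context {W : vectType F} {V : slot m -> vectType F}.
Context {Phi : (forall p : slot m, V p) -> W} (Phi_ml : multilinear Phi).

Lemma gfunE A x : gfun Phi A x = \sum_(k < K0num m L) x ^+ k *: gfun_coef Phi A k.
Proof.
rewrite /gfun /encoded (multilinear_expand Phi_ml (fun p => Ordinal (L_gt0 (tag p)))).
under eq_bigr => t _ do rewrite prodrXr.
rewrite (partition_big (fun t : T => Ordinal (choice_expo_lt t)) xpredT) //.
apply: eq_bigr => k _; rewrite scaler_sumr.
by apply: eq_big => [t|t /eqP <-].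
Qed.

Lemma gfun_coef_expo A s : gfun_coef Phi A (expo m s) = sliced Phi A s.
Proof.
rewrite /gfun_coef (big_pred1 (diag_choice s)) => [|t]; last exact: choice_expo_eq.
by congr Phi; apply: functional_extensionality_dep => p; rewrite ffunE.
Qed.

Lemma sliced_decoding f (x : 'I_(f + K0num m L) -> F) : injective x ->
  forall Fail : {set 'I_(f + K0num m L)}, (#|Fail| <= f)%N ->
  exists dec : ('I_(f + K0num m L) -> W) -> sliceidx L -> W,
    (forall y1 y2 : 'I_(f + K0num m L) -> W,
       (forall k, k \notin Fail -> y1 k = y2 k) -> forall s, dec y1 s = dec y2 s) /\
    (forall A : forall p : slot m, 'I_(L (tag p)) -> V p,
       (forall s, dec (fun k => gfun Phi A (x k)) s = sliced Phi A s) /\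
       \sum_(s : sliceidx L) dec (fun k => gfun Phi A (x k)) s = sigma_final Phi A).
Proof.
move=> x_inj Fail card_Fail.
have le_K0 : (K0num m L <= #|~: Fail|)%N by rewrite cardsCs card_ord setCK; lia.
have [h h_inj h_live] := avoiding_injection le_K0.
pose U := invmx (Vandermonde (K0num m L) (\row_l x (h l))).
exists (fun y s => \sum_(l < K0num m L) U l (Ordinal (expo_lt s)) *: y (h l)); split.
  by move=> y1 y2 eq_y s; apply: eq_bigr => l _; rewrite eq_y.
move=> A.
have dec_sliced s :
    \sum_(l < K0num m L) U l (Ordinal (expo_lt s)) *: gfun Phi A (x (h l)) = sliced Phi A s.
  under eq_bigr => l _ do rewrite gfunE.
  by rewrite (Vandermonde_interpolate (fun l => x (h l)) (inj_comp x_inj h_inj)) gfun_coef_expo.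
by split => //; apply: eq_bigr.
Qed.

End SlicedScheme.

Theorem theorem2 (F : fieldType) (F_inf : forall s : seq F, exists x : F, x \notin s)
  (n : nat) (m L : 'I_n -> nat)
  (hn : (0 < n)%N) (hm : forall i, (2 <= m i)%N) (hL : forall i, (0 < L i)%N)
  (W : vectType F) (V : slot m -> vectType F)
  (Phi : (forall p : slot m, V p) -> W) (hPhi : multilinear Phi) :
  (forall A : forall p : slot m, 'I_(L (tag p)) -> V p,
     exists c : nat -> W,
       (forall x : F, gfun Phi A x = \sum_(k < K0num m L) x ^+ k *: c k) /\
       (forall s : sliceidx L, (expo m s < K0num m L)%N) /\
       (forall s : sliceidx L, c (expo m s) = sliced Phi A s)) /\
  injective (@expo n m L) /\
  (forall (f : nat) (x : 'I_(f + K0num m L) -> F), injective x ->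
   forall Fail : {set 'I_(f + K0num m L)}, (#|Fail| <= f)%N ->
   exists dec : ('I_(f + K0num m L) -> W) -> sliceidx L -> W,
     (forall y1 y2 : 'I_(f + K0num m L) -> W,
        (forall k, k \notin Fail -> y1 k = y2 k) -> forall s, dec y1 s = dec y2 s) /\
     (forall A : forall p : slot m, 'I_(L (tag p)) -> V p,
        (forall s, dec (fun k => gfun Phi A (x k)) s = sliced Phi A s) /\
        \sum_(s : sliceidx L) dec (fun k => gfun Phi A (x k)) s = sigma_final Phi A)) /\
  (forall f : nat,
     (Nnum L * (f + 1))%:Z - (f + K0num m L)%:Z
     = ((Nnum L)%:Z - 1) * (f + 1)%:Z - (K0num m L)%:Z + 1).
Proof.
split.
  move=> A; exists (gfun_coef Phi A); split; first exact: (gfunE hm hL hPhi A).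
  by split; [exact: (expo_lt hm) | exact: (gfun_coef_expo hm)].
split; first exact: (expo_inj hm).
split; first exact: (sliced_decoding hm hL hPhi).
by move=> f; rewrite PoszM !PoszD; lia.
Qed.
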